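(* For every $t=0,1,\dots,T-2$ and every $z_m\in Z_\theta$ with $z_m\le I_t$, one has $H_t(z_m)\ge H_t(I_t)$.
   Context: Model. Fix an integer horizon $T\ge 2$, a discount factor $\alpha\in(0,1]$, and for $t=0,\dots,T-1$: unit ordering costs $c_t\in\mathbb R$, a salvage coefficient $c_T\in\mathbb R$, setup costs $K_t\ge 0$, functions $G_t:\mathbb R\to\mathbb R$, and independent nonnegative random demands $D_0,\dots,D_{T-1}$ with right-continuous distribution functions $F_t$ and finite means; all expectations appearing are assumed finite. Put $C_t(y)=(c_t-\alpha c_{t+1})y+G_t(y)+\alpha c_{t+1}E[D_t]$. Standing assumptions: (i) each $C_t$ is convex with $C_t(y)\to+\infty$ as $|y|\to\infty$; (ii) $K_t\ge \alpha K_{t+1}$ for $t=0,\dots,T-2$. Grid construction. Fix $\theta>0$, let $z_m=m\theta$ ($m\in\mathbb Z$), $Z_\theta=\{z_m:m\in\mathbb Z\}$, and $f_t(n)=F_t(z_{n+1})-F_t(z_n)$ for integers $n\ge -1$. Let $C^m_t=\min\{y: C_t(y)=\min_{x}C_t(x)\}$; with $n_0$ the integer such that $z_{n_0}<C^m_t\le z_{n_0+1}$, let $S^U_t=\min\{z_m\in Z_\theta: z_m\ge C^m_t,\ C_t(z_m)>C_t(z_{n_0})+K_t\}$. Let $s_{T-1}$ be a point with $s_{T-1}\le C^m_{T-1}$ and $C_{T-1}(s_{T-1})=C_{T-1}(C^m_{T-1})+K_{T-1}$, and $\bar I_{T-1}=s_{T-1}$. For $t=T-2,\dots,0$: $I_t=\max\{z_m\in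 Z_\theta: z_m<\min(\bar I_{t+1}-\theta,\,C^m_t)\}$, $\bar I_t=\max\{z_m\in Z_\theta: z_m\le I_t,\ C_t(z_m)>C_t(I_t)+K_t\}+\theta$. Set $H_{T-1}=C_{T-1}$, $S_{T-1}=C^m_{T-1}$. Whenever $H_t,S_t,s_t$ are defined, $V_t(y)=H_t(S_t)+K_t$ for $y<s_t$ and $V_t(y)=H_t(y)$ for $y\ge s_t$. For $t=T-2,\dots,0$: $H_t(y)=C_t(y)+\alpha\sum_{n=-1}^{\infty}V_{t+1}(y-z_n)f_t(n)$; $S_t=\max\{z_m\in Z_\theta: I_t\le z_m\le S^U_t,\ H_t(z_m)=\min\{H_t(z_n): z_n\in Z_\theta,\ I_t\le z_n\le S^U_t\}\}$; $s_t=S_t$ if $K_t=0$, else $s_t=\min\{z_m\in Z_\theta:\bar I_t\le z_m\le S_t,\ H_t(z_m)\le H_t(S_t)+K_t\}$. *)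

From Stdlib Require Import Reals Lra ZArith ClassicalEpsilon.
From Coquelicot Require Import Coquelicot.
Open Scope R_scope.

Record Model := mkModel {
  T : nat;
  alpha : R;
  c : nat -> R;                   (* c t = unit ordering cost, c T = salvage coeff *)
  K : nat -> R;
  G : nat -> R -> R;
  F : nat -> R -> R;              (* distribution function of demand D_t *)
  ED : nat -> R;
  theta : R
}.

(* Choice operators (classical).  Each is used only on predicates that
   have exactly one witness under the standing assumptions. *)
Definition zmax (P : Z -> Prop) : Z :=
  epsilon (inhabits 0%Z) (fun m => P m /\ forall k, P k -> (k <= m)%Z).
Definition zmin (P : Z -> Prop) : Z :=
  epsilon (inhabits 0%Z) (fun m => P m /\ forall k, P k -> (m <= k)%Z).
Definition zchoose (P : Z -> Prop) : Z := epsilon (inhabits 0%Z) P.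
Definition rmin (P : R -> Prop) : R :=
  epsilon (inhabits 0) (fun y => P y /\ forall x, P x -> y <= x).
Definition rchoose (P : R -> Prop) : R := epsilon (inhabits 0) P.

Section Construction.
Variable M : Model.

Definition z (m : Z) : R := IZR m * theta M.

Definition f (t : nat) (n : Z) : R := F M t (z (n + 1)) - F M t (z n).

Definition C (t : nat) (y : R) : R :=
  (c M t - alpha M * c M (t + 1)) * y + G M t y + alpha M * c M (t + 1) * ED M t.

Definition Cm (t : nat) : R := rmin (fun y => forall x, C t y <= C t x).

Definition n0 (t : nat) : Z := zchoose (fun n => z n < Cm t /\ Cm t <= z (n + 1)).

Definition SU (t : nat) : R :=
  z (zmin (fun m => Cm t <= z m /\ C t (z m) > C t (z (n0 t)) + K M t)).

Definition sTm1 : R :=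
  let t := (T M - 1)%nat in
  rchoose (fun s => s <= Cm t /\ C t s = C t (Cm t) + K M t).

Definition Ifun (t : nat) (Ibar_next : R) : R :=
  z (zmax (fun m => z m < Rmin (Ibar_next - theta M) (Cm t))).

Definition Ibarfun (t : nat) (It : R) : R :=
  z (zmax (fun m => z m <= It /\ C t (z m) > C t It + K M t)) + theta M.

(* Ibar_aux k = \bar I_{T-1-k} *)
Fixpoint Ibar_aux (k : nat) : R :=
  match k with
  | O => sTm1
  | S k' => let t := (T M - 1 - k)%nat in Ibarfun t (Ifun t (Ibar_aux k'))
  end.

Definition Ibar (t : nat) : R := Ibar_aux (T M - 1 - t).
Definition I (t : nat) : R := Ifun t (Ibar (t + 1)).

Definition Vof (Kt : R) (HSs : (R -> R) * R * R) (y : R) : R :=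
  let '(Hf, Sv, sv) := HSs in
  if Rlt_dec y sv then Hf Sv + Kt else Hf y.

(* The discretized expectation term: sum_{n>=-1} V(y - z_n) f_t(n),
   reindexed by k : nat with n = k - 1. *)
Definition Eterm (t : nat) (V : R -> R) (y : R) (k : nat) : R :=
  V (y - z (Z.of_nat k - 1)) * f t (Z.of_nat k - 1).

Definition step (t : nat) (next : (R -> R) * R * R) : (R -> R) * R * R :=
  let V := Vof (K M (t + 1)) next in
  let H := fun y => C t y + alpha M * Series (Eterm t V y) in
  let St := z (zmax (fun m => I t <= z m <= SU t /\
                 forall n, I t <= z n <= SU t -> H (z m) <= H (z n))) in
  let st := if Req_EM_T (K M t) 0 then St
            else z (zmin (fun m => Ibar t <= z m <= St /\ H (z m) <= H St + K M t)) in
  (H, St, st).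

(* HSs_aux k = (H_{T-1-k}, S_{T-1-k}, s_{T-1-k}) *)
Fixpoint HSs_aux (k : nat) : (R -> R) * R * R :=
  match k with
  | O => (C (T M - 1), Cm (T M - 1), sTm1)
  | S k' => step (T M - 1 - k)%nat (HSs_aux k')
  end.

Definition HSs (t : nat) : (R -> R) * R * R := HSs_aux (T M - 1 - t).
Definition H (t : nat) : R -> R := fst (fst (HSs t)).
Definition Sopt (t : nat) : R := snd (fst (HSs t)).
Definition sopt (t : nat) : R := snd (HSs t).
Definition V (t : nat) : R -> R := Vof (K M t) (HSs t).

End Construction.

Definition convex_fun (g : R -> R) : Prop :=
  forall x y l, 0 <= l <= 1 -> g (l * x + (1 - l) * y) <= l * g x + (1 - l) * g y.

(* F is the distribution function of a nonnegative random variable with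
   finite mean m (E[D] = int_0^oo (1 - F)). *)
Definition nonneg_distribution (Fd : R -> R) (m : R) : Prop :=
  (forall x y, x <= y -> Fd x <= Fd y) /\
  (forall x, filterlim Fd (at_right x) (locally (Fd x))) /\
  (forall x, x < 0 -> Fd x = 0) /\
  filterlim Fd (Rbar_locally p_infty) (locally 1) /\
  is_RInt_gen (fun x => 1 - Fd x) (at_point 0) (Rbar_locally p_infty) m.

Definition standing (M : Model) : Prop :=
  (2 <= T M)%nat /\
  0 < alpha M <= 1 /\
  0 < theta M /\
  (forall t, (t <= T M - 1)%nat -> 0 <= K M t) /\
  (forall t, (t <= T M - 1)%nat -> nonneg_distribution (F M t) (ED M t)) /\
  (forall t, (t <= T M - 1)%nat ->
     convex_fun (C M t) /\
     filterlim (C M t) (Rbar_locally p_infty) (Rbar_locally p_infty) /\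
     filterlim (C M t) (Rbar_locally m_infty) (Rbar_locally p_infty)) /\
  (forall t, (t <= T M - 2)%nat -> K M t >= alpha M * K M (t + 1)) /\
  (* all expectations appearing are finite *)
  (forall t y, (t <= T M - 2)%nat ->
     ex_series (fun k => Rabs (Eterm M t (V M (t + 1)) y k))).

(* H_t(y) = C_t(y) + alpha * sum_n V_{t+1}(y - z_n) f_t(n), and both summands are
   handled separately.
   - Expected future cost: demands are >= z_{-1} = -theta, and y + theta <= I_t + theta
     < \bar I_{t+1} <= s_{t+1}; below s_{t+1} one orders up to S_{t+1}, so V_{t+1}
     is constant there and the series takes the same value at z_m and at I_t.
     The inequality \bar I_t <= s_t is proved by following the construction of
     (S_t, s_t): all the grid extrema it uses exist under the standing assumptions.
   - Immediate cost: C_t is convex and coercive, hence has a least minimizer C^m_t,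
     and is nonincreasing on (-oo, C^m_t], which contains z_m <= I_t < C^m_t.
   The file first develops convex coercive functions of one variable (continuity,
   existence of a least minimizer), then extremal integers and the grid, then the
   backward step, and finally derives the theorem. *)

From Stdlib Require Import Reals Lra Lia ZArith ClassicalEpsilon Classical.
From Coquelicot Require Import Coquelicot.
(* Imported last so that the model's C is not shadowed by Coquelicot's complex numbers. *)
Open Scope R_scope.

Lemma eventually_above_right (g : R -> R) :
  filterlim g (Rbar_locally p_infty) (Rbar_locally p_infty) ->
  forall B, exists N, forall y, N < y -> B < g y.
Proof.
  intros Hg B. apply (Hg (fun y => B < y)). now exists B.
Qed.

Lemma eventually_above_left (g : R -> R) :
  filterlim g (Rbar_locally m_infty) (Rbar_locally p_infty) ->
  forall B, exists N, forall y, y < N -> B < g y.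
Proof.
  intros Hg B. apply (Hg (fun y => B < y)). now exists B.
Qed.

Section ConvexFunction.
Variable g : R -> R.
Hypothesis g_convex : convex_fun g.

Lemma convex_chord a b c : a < c -> a <= b <= c ->
  g b * (c - a) <= (c - b) * g a + (b - a) * g c.
Proof.
  intros Hac Hb.
  set (l := (c - b) / (c - a)).
  assert (El : l * (c - a) = c - b) by (unfold l; field; lra).
  assert (Hl : 0 <= l <= 1).
  { split; apply (Rmult_le_reg_r (c - a)); lra. }
  pose proof (g_convex a c l Hl) as Hchord.
  replace (l * a + (1 - l) * c) with b in Hchord by nra.
  apply (Rmult_le_compat_r (c - a)) in Hchord; [|lra].
  nra.
Qed.

(* The local Lipschitz constant of g at x, controlling g on [x - 1, x + 1]. *)
Definition lip_const (x : R) : R := Rabs (g (x - 1) - g x) + Rabs (g (x + 1) - g x).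

Lemma lip_const_nonneg x : 0 <= lip_const x.
Proof.
  unfold lip_const.
  pose proof (Rabs_pos (g (x - 1) - g x)). pose proof (Rabs_pos (g (x + 1) - g x)). lra.
Qed.

(* A convex function is Lipschitz near every point: two chords through y and two
   of x - 1, x, x + 1 bound g y - g x from above and from below. *)
Lemma convex_local_lipschitz x y : Rabs (y - x) <= 1 ->
  Rabs (g y - g x) <= Rabs (y - x) * lip_const x.
Proof.
  intros Hxy. unfold lip_const.
  set (a := g (x - 1) - g x). set (b := g (x + 1) - g x).
  pose proof (proj1 (Rabs_le_between a (Rabs a)) (Rle_refl _)) as Ha.
  pose proof (proj1 (Rabs_le_between b (Rabs b)) (Rle_refl _)) as Hb.
  destruct (Rle_lt_dec x y) as [Hle|Hlt].
  - rewrite (Rabs_right (y - x)) in Hxy |- * by lra.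
    pose proof (convex_chord x y (x + 1) ltac:(lra) ltac:(lra)) as Hup.
    pose proof (convex_chord (x - 1) x y ltac:(lra) ltac:(lra)) as Hlow.
    assert (g y - g x <= (y - x) * b) by (unfold b; nra).
    assert (- ((y - x) * a) <= g y - g x) by (unfold a; nra).
    apply Rabs_le_between. split; nra.
  - rewrite (Rabs_left (y - x)) in Hxy |- * by lra.
    pose proof (convex_chord (x - 1) y x ltac:(lra) ltac:(lra)) as Hup.
    pose proof (convex_chord y x (x + 1) ltac:(lra) ltac:(lra)) as Hlow.
    assert (g y - g x <= (x - y) * a) by (unfold a; nra).
    assert (- ((x - y) * b) <= g y - g x) by (unfold b; nra).
    apply Rabs_le_between. split; nra.
Qed.

Lemma convex_near x eps : 0 < eps ->
  exists delta, 0 < delta /\ forall y, Rabs (y - x) < delta -> Rabs (g y - g x) < eps.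
Proof.
  intros Heps.
  pose proof (lip_const_nonneg x) as HL.
  set (delta := Rmin 1 (eps / (lip_const x + 1))).
  assert (Hd1 : delta <= 1) by apply Rmin_l.
  assert (Hd2 : delta * (lip_const x + 1) <= eps).
  { apply (Rle_trans _ (eps / (lip_const x + 1) * (lip_const x + 1))).
    - apply Rmult_le_compat_r; [lra | apply Rmin_r].
    - right; field; lra. }
  exists delta. split.
  - apply Rmin_pos; [lra | apply Rdiv_lt_0_compat; lra].
  - intros y Hy.
    pose proof (convex_local_lipschitz x y ltac:(lra)).
    pose proof (Rabs_pos (y - x)). nra.
Qed.

Lemma convex_continuous x : continuity_pt g x.
Proof.
  intros eps Heps.
  destruct (convex_near x eps Heps) as [delta [Hd Hnear]].
  exists delta. split; [exact Hd|].
  intros y [_ Hy]. exact (Hnear y Hy).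
Qed.

Definition minimizer (y : R) : Prop := forall x, g y <= g x.

Lemma convex_nonincreasing_left cm : minimizer cm ->
  forall a b, a <= b <= cm -> g b <= g a.
Proof.
  intros Hmin a b Hb.
  destruct (Req_dec b cm) as [->|Hne]; [apply Hmin|].
  pose proof (convex_chord a b cm ltac:(lra) Hb) as Hchord.
  pose proof (Hmin b). nra.
Qed.

Hypothesis g_coercive_right : filterlim g (Rbar_locally p_infty) (Rbar_locally p_infty).
Hypothesis g_coercive_left : filterlim g (Rbar_locally m_infty) (Rbar_locally p_infty).

(* Coercivity confines the search for a minimum to a compact interval. *)
Lemma convex_coercive_has_minimizer : exists y, minimizer y.
Proof.
  destruct (eventually_above_right g g_coercive_right (g 0)) as [N1 HN1].
  destruct (eventually_above_left g g_coercive_left (g 0)) as [N2 HN2].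
  set (a := Rmin N2 0 - 1). set (b := Rmax N1 0 + 1).
  pose proof (Rmin_l N2 0). pose proof (Rmin_r N2 0).
  pose proof (Rmax_l N1 0). pose proof (Rmax_r N1 0).
  destruct (continuity_ab_min g a b ltac:(unfold a, b; lra)
              (fun x _ => convex_continuous x)) as [y [Hy _]].
  exists y. intros x. pose proof (Hy 0 ltac:(unfold a, b; lra)).
  destruct (Rle_lt_dec a x); destruct (Rle_lt_dec x b).
  - now apply Hy.
  - pose proof (HN1 x ltac:(unfold b in *; lra)). lra.
  - pose proof (HN2 x ltac:(unfold a in *; lra)). lra.
  - pose proof (HN2 x ltac:(unfold a in *; lra)). lra.
Qed.

Lemma lub_approx (E : R -> Prop) l : is_lub E l ->
  forall delta, 0 < delta -> exists u, E u /\ l - delta < u.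
Proof.
  intros [_ Hleast] delta Hdelta.
  apply NNPP. intros Hnone.
  assert (Hub : is_upper_bound E (l - delta)).
  { intros u Eu. apply Rnot_lt_le. intros Hu. apply Hnone. now exists u. }
  pose proof (Hleast _ Hub). lra.
Qed.

(* The minimizers form a nonempty set bounded below; its infimum is again a
   minimizer, by the local Lipschitz bound. *)
Lemma convex_coercive_least_minimizer :
  exists y, minimizer y /\ forall y', minimizer y' -> y <= y'.
Proof.
  destruct convex_coercive_has_minimizer as [y0 Hy0].
  destruct (eventually_above_left g g_coercive_left (g y0)) as [N HN].
  assert (Hbelow : forall y, minimizer y -> N <= y).
  { intros y Hy. apply Rnot_lt_le. intros Hlt. pose proof (HN y Hlt). pose proof (Hy y0). lra. }
  set (E := fun u => minimizer (- u)).
  destruct (completeness E) as [l Hl].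
  { exists (- N). intros u Eu. pose proof (Hbelow _ Eu). lra. }
  { exists (- y0). unfold E. now rewrite Ropp_involutive. }
  assert (Hlow : forall y, minimizer y -> - l <= y).
  { intros y Hy. destruct Hl as [Hub _].
    assert (Ey : E (- y)) by (unfold E; now rewrite Ropp_involutive).
    pose proof (Hub _ Ey). lra. }
  exists (- l). split; [|exact Hlow].
  intros x. apply Rle_plus_epsilon. intros eps Heps.
  destruct (convex_near (- l) eps Heps) as [delta [Hd Hnear]].
  destruct (lub_approx E l Hl delta Hd) as [u [Eu Hu]].
  pose proof (Hlow _ Eu).
  assert (Hclose : Rabs (- u - - l) < delta) by (rewrite Rabs_right; lra).
  pose proof (Hnear (- u) Hclose) as Hg.
  pose proof (Rabs_def2 _ _ Hg). pose proof (Eu x). lra.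
Qed.

Lemma rmin_minimizer x : g (rmin minimizer) <= g x.
Proof.
  unfold rmin.
  destruct (epsilon_spec (inhabits 0)
              (fun y => minimizer y /\ forall y', minimizer y' -> y <= y')
              convex_coercive_least_minimizer) as [Hmin _].
  apply Hmin.
Qed.
End ConvexFunction.

Lemma Z_max_exists (P : Z -> Prop) m0 B : P m0 -> (forall m, P m -> (m <= B)%Z) ->
  exists m, P m /\ forall k, P k -> (k <= m)%Z.
Proof.
  intros H0 HB.
  assert (Hgap : forall n B', (B' = m0 + Z.of_nat n)%Z -> (forall m, P m -> (m <= B')%Z) ->
            exists m, P m /\ forall k, P k -> (k <= m)%Z).
  { induction n as [|n IH]; intros B' EB HB'.
    - exists m0. split; [exact H0|]. intros k Hk. specialize (HB' k Hk). lia.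
    - destruct (classic (P B')) as [HP|HP].
      + exists B'. auto.
      + apply (IH (B' - 1)%Z); [lia|]. intros m Hm. specialize (HB' m Hm).
        assert (m <> B') by (intros ->; contradiction). lia. }
  assert (Hm0B : (m0 <= B)%Z) by auto.
  apply (Hgap (Z.to_nat (B - m0)) B); [lia | exact HB].
Qed.

Lemma zmax_correct (P : Z -> Prop) m0 B : P m0 -> (forall m, P m -> (m <= B)%Z) ->
  P (zmax P) /\ forall k, P k -> (k <= zmax P)%Z.
Proof.
  intros H0 HB. unfold zmax. apply (epsilon_spec (inhabits 0%Z)). exact (Z_max_exists P m0 B H0 HB).
Qed.

Lemma zmin_correct (P : Z -> Prop) m0 B : P m0 -> (forall m, P m -> (B <= m)%Z) ->
  P (zmin P) /\ forall k, P k -> (zmin P <= k)%Z.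
Proof.
  intros H0 HB. unfold zmin. apply (epsilon_spec (inhabits 0%Z)).
  destruct (Z_max_exists (fun m => P (- m)%Z) (- m0) (- B)) as [m [Hm Hmax]].
  - now rewrite Z.opp_involutive.
  - intros m Hm. specialize (HB _ Hm). lia.
  - exists (- m)%Z. split; [exact Hm|]. intros k Hk.
    assert (Hk' : P (- - k)%Z) by now rewrite Z.opp_involutive.
    specialize (Hmax _ Hk'). lia.
Qed.

Lemma finite_argmin (h : Z -> R) a n :
  exists m, (a <= m <= a + Z.of_nat n)%Z /\
            forall k, (a <= k <= a + Z.of_nat n)%Z -> h m <= h k.
Proof.
  induction n as [|n [m [Hm Hmin]]].
  - exists a. split; [lia|]. intros k Hk. replace k with a by lia. lra.
  - set (e := (a + Z.of_nat (S n))%Z).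
    assert (Hsplit : forall k, (a <= k <= e)%Z -> k = e \/ (a <= k <= a + Z.of_nat n)%Z) by lia.
    destruct (Rle_lt_dec (h m) (h e)) as [Hle|Hlt].
    + exists m. split; [lia|]. intros k Hk.
      destruct (Hsplit k Hk) as [->|Hk']; [exact Hle | now apply Hmin].
    + exists e. split; [lia|]. intros k Hk.
      destruct (Hsplit k Hk) as [->|Hk']; [lra|]. specialize (Hmin k Hk'). lra.
Qed.

Section Grid.
Variable M : Model.
Hypothesis theta_pos : 0 < theta M.

Lemma z_le a b : z M a <= z M b <-> (a <= b)%Z.
Proof.
  unfold z. split; intro H.
  - apply le_IZR. apply (Rmult_le_reg_r (theta M)); auto.
  - apply Rmult_le_compat_r; [lra | now apply IZR_le].
Qed.

Lemma z_succ a : z M (a + 1) = z M a + theta M.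
Proof. unfold z. rewrite plus_IZR. ring. Qed.

Lemma z_above x : exists m, x < z M m.
Proof.
  exists (up (x / theta M)). destruct (archimed (x / theta M)) as [Hup _]. unfold z.
  replace x with (x / theta M * theta M) at 1 by (field; lra).
  apply Rmult_lt_compat_r; lra.
Qed.

Lemma z_below x : exists m, z M m < x.
Proof.
  destruct (z_above (- x)) as [m Hm]. exists (- m)%Z. unfold z in *. rewrite opp_IZR. lra.
Qed.

Lemma grid_below a : z M (zmax (fun m => z M m < a)) < a.
Proof.
  destruct (z_below a) as [m0 H0]. destruct (z_above a) as [B HB].
  apply (zmax_correct (fun m => z M m < a) m0 B H0). intros m Hm. apply z_le. lra.
Qed.

Lemma Ifun_lt t Ib : Ifun M t Ib < Ib - theta M /\ Ifun M t Ib < Cm M t.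
Proof.
  pose proof (grid_below (Rmin (Ib - theta M) (Cm M t))) as Hlt. fold (Ifun M t Ib) in Hlt.
  split; eapply Rlt_le_trans; eauto; [apply Rmin_l | apply Rmin_r].
Qed.

(* For a grid point z_{m_I}, \bar I is a grid point no larger: the last grid point
   whose cost exceeds C_t(z_{m_I}) + K_t lies strictly left of z_{m_I}. *)
Lemma Ibarfun_le t mI : 0 <= K M t ->
  filterlim (C M t) (Rbar_locally m_infty) (Rbar_locally p_infty) ->
  exists mb, Ibarfun M t (z M mI) = z M mb /\ (mb <= mI)%Z.
Proof.
  intros HK Hleft. unfold Ibarfun.
  set (Q := fun m => z M m <= z M mI /\ C M t (z M m) > C M t (z M mI) + K M t).
  destruct (eventually_above_left _ Hleft (C M t (z M mI) + K M t)) as [N HN].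
  destruct (z_below (Rmin N (z M mI))) as [m0 H0].
  pose proof (Rmin_l N (z M mI)). pose proof (Rmin_r N (z M mI)).
  destruct (zmax_correct Q m0 mI) as [[Hq Hcost] _].
  - split; [lra | apply Rlt_gt, HN; lra].
  - intros m [Hm _]. now apply z_le.
  - exists (zmax Q + 1)%Z. rewrite z_succ. split; [reflexivity|].
    assert (Hne : zmax Q <> mI) by (intros E; rewrite E in Hcost; lra).
    apply z_le in Hq. lia.
Qed.

Lemma Cm_le_SU t : filterlim (C M t) (Rbar_locally p_infty) (Rbar_locally p_infty) ->
  Cm M t <= SU M t.
Proof.
  intros Hright. unfold SU.
  set (U := fun m => Cm M t <= z M m /\ C M t (z M m) > C M t (z M (n0 M t)) + K M t).
  destruct (eventually_above_right _ Hright (C M t (z M (n0 M t)) + K M t)) as [N HN].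
  destruct (z_above (Rmax N (Cm M t))) as [m0 H0].
  pose proof (Rmax_l N (Cm M t)). pose proof (Rmax_r N (Cm M t)).
  destruct (z_below (Cm M t)) as [B HB].
  apply (zmin_correct U m0 B).
  - split; [lra | apply Rlt_gt, HN; lra].
  - intros m [Hm _]. apply z_le. lra.
Qed.

End Grid.

Definition I_index (M : Model) (t : nat) : Z :=
  zmax (fun m => z M m < Rmin (Ibar M (t + 1) - theta M) (Cm M t)).

Lemma I_index_spec (M : Model) t : I M t = z M (I_index M t).
Proof. reflexivity. Qed.

Section BackwardStep.
Variable M : Model.
Hypothesis theta_pos : 0 < theta M.
Variable t : nat.
Variable next : (R -> R) * R * R.
Hypothesis C_coercive_right : filterlim (C M t) (Rbar_locally p_infty) (Rbar_locally p_infty).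

Let Ht : R -> R := fst (fst (step M t next)).
Let St : R := snd (fst (step M t next)).

(* S_t is the largest minimizer of H_t over the grid points of [I_t, S^U_t]; this
   interval contains a grid point because I_t < C^m_t <= S^U_t, so S_t >= I_t. *)
Lemma step_S_ge_I : I M t <= St.
Proof.
  pose proof (I_index_spec M t) as EI. set (mI := I_index M t) in EI.
  set (mU := zmin (fun m => Cm M t <= z M m /\ C M t (z M m) > C M t (z M (n0 M t)) + K M t)).
  assert (EU : SU M t = z M mU) by reflexivity.
  assert (HIU : (mI <= mU)%Z).
  { apply (z_le M theta_pos). rewrite <- EI, <- EU.
    pose proof (proj2 (Ifun_lt M theta_pos t (Ibar M (t + 1)))).
    pose proof (Cm_le_SU M theta_pos t C_coercive_right). unfold I. lra. }
  destruct (finite_argmin (fun k => Ht (z M k)) mI (Z.to_nat (mU - mI))) as [ms [Hms Hmin]].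
  rewrite Z2Nat.id, Zplus_minus in Hms, Hmin by lia.
  assert (Hrange : forall k, I M t <= z M k <= SU M t <-> (mI <= k <= mU)%Z).
  { intros k. rewrite EI, EU, !(z_le M theta_pos). tauto. }
  destruct (zmax_correct (fun m => I M t <= z M m <= SU M t /\
              forall n, I M t <= z M n <= SU M t -> Ht (z M m) <= Ht (z M n)) ms mU)
    as [[[HS _] _] _].
  - split; [now apply Hrange|]. intros n Hn. apply Hmin, Hrange, Hn.
  - intros m [Hm _]. apply Hrange in Hm. lia.
  - exact HS.
Qed.

Hypothesis K_nonneg : 0 <= K M t.
Hypothesis C_coercive_left : filterlim (C M t) (Rbar_locally m_infty) (Rbar_locally p_infty).

(* s_t >= \bar I_t: when K_t > 0, s_t is the least grid point of [\bar I_t, S_t]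
   satisfying the reorder condition, and S_t itself is one. *)
Lemma step_s_ge_Ibar : Ibar M t = Ibarfun M t (I M t) -> Ibar M t <= snd (step M t next).
Proof.
  intros EIb.
  assert (Hs : snd (step M t next) =
     if Req_EM_T (K M t) 0 then St
     else z M (zmin (fun m => Ibar M t <= z M m <= St /\ Ht (z M m) <= Ht St + K M t)))
    by reflexivity.
  destruct (Ibarfun_le M theta_pos t (I_index M t) K_nonneg C_coercive_left) as [mb [Emb Hmb]].
  rewrite <- I_index_spec, <- EIb in Emb.
  assert (HIb : Ibar M t <= I M t).
  { rewrite Emb, I_index_spec. now apply z_le. }
  pose proof step_S_ge_I as HSI.
  rewrite Hs. destruct (Req_EM_T (K M t) 0) as [_|_]; [lra|].
  set (mS := zmax (fun m => I M t <= z M m <= SU M t /\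
               forall n, I M t <= z M n <= SU M t -> Ht (z M m) <= Ht (z M n))).
  assert (ES : St = z M mS) by reflexivity.
  destruct (zmin_correct (fun m => Ibar M t <= z M m <= St /\ Ht (z M m) <= Ht St + K M t) mS mb)
    as [[[Hlow _] _] _].
  - rewrite <- ES. split; lra.
  - intros m [[Hm _] _]. rewrite Emb in Hm. now apply z_le in Hm.
  - exact Hlow.
Qed.

End BackwardStep.

Lemma HSs_succ (M : Model) t : (t + 1 <= T M - 1)%nat -> HSs M t = step M t (HSs M (t + 1)).
Proof.
  intros Ht. unfold HSs.
  replace (T M - 1 - t)%nat with (S (T M - 1 - (t + 1))) by lia.
  cbn [HSs_aux]. now replace (T M - 1 - S (T M - 1 - (t + 1)))%nat with t by lia.
Qed.

Lemma Ibar_succ (M : Model) t : (t + 1 <= T M - 1)%nat -> Ibar M t = Ibarfun M t (I M t).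
Proof.
  intros Ht. unfold Ibar at 1, I.
  replace (T M - 1 - t)%nat with (S (T M - 1 - (t + 1))) by lia.
  cbn [Ibar_aux]. now replace (T M - 1 - S (T M - 1 - (t + 1)))%nat with t by lia.
Qed.

Lemma H_succ (M : Model) t y : (t + 1 <= T M - 1)%nat ->
  H M t y = C M t y + alpha M * Series (Eterm M t (V M (t + 1)) y).
Proof. intros Ht. unfold H. now rewrite HSs_succ. Qed.

Lemma Ibar_le_sopt (M : Model) : standing M ->
  forall t, (1 <= t <= T M - 1)%nat -> Ibar M t <= sopt M t.
Proof.
  intros (HT & _ & Htheta & HK & _ & HC & _) t Ht.
  destruct (Nat.eq_dec t (T M - 1)) as [->|Hne].
  - unfold Ibar, sopt, HSs. rewrite Nat.sub_diag. simpl. lra.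
  - destruct (HC t ltac:(lia)) as (_ & Hright & Hleft).
    unfold sopt. rewrite HSs_succ by lia.
    apply step_s_ge_Ibar; auto; [apply HK; lia | apply Ibar_succ; lia].
Qed.

(* Below the reorder level one orders up to S_t, so V_t is constant there. *)
Lemma V_below_sopt (M : Model) t y : y < sopt M t -> V M t y = H M t (Sopt M t) + K M t.
Proof.
  unfold V, sopt, H, Sopt. destruct (HSs M t) as [[Hf Sv] sv]. simpl.
  destruct (Rlt_dec y sv); [reflexivity | contradiction].
Qed.

(* Demands are at least z_{-1} = -theta, so from any y with y + theta < s_{t+1} the
   post-demand level stays below s_{t+1}: the expected future cost does not depend on y. *)
Lemma expected_cost_const_below (M : Model) t y y' : 0 < theta M ->
  y + theta M < sopt M (t + 1) -> y' + theta M < sopt M (t + 1) ->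
  Series (Eterm M t (V M (t + 1)) y) = Series (Eterm M t (V M (t + 1)) y').
Proof.
  intros Htheta Hy Hy'. apply Series_ext. intros k. unfold Eterm.
  assert (Hdemand : - theta M <= z M (Z.of_nat k - 1)).
  { replace (- theta M) with (z M (-1)) by (unfold z; simpl; ring).
    apply z_le; [exact Htheta | lia]. }
  rewrite !V_below_sopt by lra. reflexivity.
Qed.

Theorem lemma3p1 (M : Model) :
  standing M ->
  forall t : nat, (t <= T M - 2)%nat ->
  forall m : Z, z M m <= I M t -> H M t (z M m) >= H M t (I M t).
Proof.
  intros Hstd t Ht m Hm.
  pose proof Hstd as (HT & _ & Htheta & _ & _ & HC & _).
  destruct (HC t ltac:(lia)) as (Hconv & Hright & Hleft).
  destruct (Ifun_lt M Htheta t (Ibar M (t + 1))) as [HI_Ibar HI_Cm]. fold (I M t) in HI_Ibar, HI_Cm.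
  pose proof (Ibar_le_sopt M Hstd (t + 1) ltac:(lia)) as Hs.
  rewrite !H_succ by lia.
  rewrite (expected_cost_const_below M t (z M m) (I M t)) by lra.
  pose proof (rmin_minimizer (C M t) Hconv Hright Hleft) as Hmin.
  pose proof (convex_nonincreasing_left (C M t) Hconv (Cm M t) Hmin (z M m) (I M t)) as Hdecr.
  lra.
Qed.
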